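(* Let $(S,\|\cdot\|)$ be a complete $RN$ module over $K$ with base $(\Omega,\mathcal F,P)$, let $\{T(t):t\geq 0\}$ be an a.s. bounded $C_{0}$--semigroup on $S$ with infinitesimal generator $(A,D(A))$. Given $x\in D(A)$, define $f:[0,+\infty)\to S$ by $f(t)=T(t)x$. Then for every $x\in D(A)$ and every real $r>0$, $f$ is $L^{0}$-Lipschitz on $[0,r]$, i.e. there exists $\xi\in L^0_+(\mathcal F)$ with $\|f(t_1)-f(t_2)\|\le \xi|t_1-t_2|$ for all $t_1,t_2\in[0,r]$.
   Context: $(\Omega,\mathcal F,P)$ is a probability space; $L^{0}(\mathcal F,K)$ ($K=R$ or $C$) is the algebra of equivalence classes of $K$-valued $\mathcal F$-measurable random variables, ordered a.s.; $L^{0}_{+}(\mathcal F)=\{\xi\in L^0(\mathcal F,R):\xi\ge 0\}$. Suprema are taken in the complete lattice of extended random variables. An $RN$ module over $K$ with base $(\Omega,\mathcal F,P)$ is a left $L^0(\mathcal F,K)$-module $S$ with a map $\|\cdot\|:S\to L^0_+(\mathcal F)$ such that $\|\xi x\|=|\xi|\|x\|$, $\|x+y\|\le\|x\|+\|y\|$, and $\|x\|=0$ implies $x=0$; it carries the $(\varepsilon,\lambda)$-topology, in which $x_n\to x$ iff $\|x_n-x\|\to0$ in probability; completeness refers to this topology. $B(S)$ is the set of continuous module homomorphisms $S\to S$ (equivalently $\|Tx\|\le \xi\|x\|$ for some $\xi\in L^0_+(\mathcal F)$), with $\|T\|=\bigwedge\{\xi\in L^0_+(\mathcal F):\|Tx\|\le\xi\|x\|\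 \forall x\}$. A $C_0$--semigroup is $\{T(t):t\ge0\}\subset B(S)$ with $T(0)=I$, $T(s)T(t)=T(s+t)$, $\lim_{t\downarrow0}T(t)x=x$ for all $x$. It is a.s. bounded if there is a real $L>0$ with $\bigvee_{t\in[0,L]}\|T(t)\|\in L^0_+(\mathcal F)$. Its infinitesimal generator is $Ax=\lim_{t\downarrow0}\frac{T(t)x-x}{t}$ on $D(A)=\{x:\text{the limit exists}\}$. *)

From HB Require Import structures.
From mathcomp Require Import all_boot all_order all_algebra.
From mathcomp Require Import all_classical all_reals all_analysis measurable_realfun.
From mathcomp Require complex.
Import complex.ComplexField.
Import Order.TTheory GRing.Theory Num.Theory.
Set Implicit Arguments.
Unset Strict Implicit.
Unset Printing Implicit Defensive.
Local Open Scope classical_set_scope.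
Local Open Scope ring_scope.

(* L^0(F,K) is modelled by measurable functions Omega -> K taken modulo
   P-a.s. equality; K = C is modelled by (complex R), K = R by the complex
   valued functions with vanishing imaginary part (flag isC = false). *)

Section RN.
Context {d : measure_display} {Omega : measurableType d} {R : realType}.
Variable P : probability Omega R.
Local Notation C := (complex.complex R).

Definition Kval (isC : bool) (xi : Omega -> C) : Prop :=
  [/\ measurable_fun setT (fun w => complex.Re (xi w)),
      measurable_fun setT (fun w => complex.Im (xi w)) &
      (~~ isC -> forall w, complex.Im (xi w) = 0)].

Definition L0pos (xi : Omega -> R) : Prop :=
  measurable_fun setT xi /\ (forall w, 0 <= xi w).

Definition cstK (t : R) : Omega -> C := fun _ => complex.Complex t 0.

Section Module.
Variables (isC : bool) (S : zmodType)
  (smul : (Omega -> C) -> S -> S) (nrm : S -> Omega -> R).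

(* (S, nrm) is an RN module over K with base (Omega, F, P):
   a left L^0(F,K)-module (scalar action well defined on a.s.-classes)
   with an L^0_+-valued norm satisfying the RN-module axioms a.s. *)
Definition is_RN_module : Prop :=
  (forall xi x y, Kval isC xi -> smul xi (x + y) = smul xi x + smul xi y) /\
  (forall xi eta x, Kval isC xi -> Kval isC eta ->
      smul (fun w => xi w + eta w) x = smul xi x + smul eta x) /\
  (forall xi eta x, Kval isC xi -> Kval isC eta ->
      smul (fun w => xi w * eta w) x = smul xi (smul eta x)) /\
  (forall x, smul (fun _ => 1) x = x) /\
  (forall xi eta x, Kval isC xi -> Kval isC eta ->
      {ae P, forall w, xi w = eta w} -> smul xi x = smul eta x) /\
  (forall x, measurable_fun setT (nrm x) /\ {ae P, forall w, 0 <= nrm x w}) /\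
  (forall xi x, Kval isC xi ->
      {ae P, forall w, nrm (smul xi x) w = complex.ComplexField.Normc.normc (xi w) * nrm x w}) /\
  (forall x y, {ae P, forall w, nrm (x + y) w <= nrm x w + nrm y w}) /\
  (forall x, {ae P, forall w, nrm x w = 0} -> x = 0).

(* (eps,lambda)-topology: convergence in probability of the norm *)
Definition cvg_seq (u : nat -> S) (y : S) : Prop :=
  forall eps lam : R, 0 < eps -> 0 < lam ->
  exists N : nat, forall n, (N <= n)%N ->
    (P [set w | (eps < nrm (u n - y) w)%R] < lam%:E)%E.

Definition cauchy_seq (u : nat -> S) : Prop :=
  forall eps lam : R, 0 < eps -> 0 < lam ->
  exists N : nat, forall m n, (N <= m)%N -> (N <= n)%N ->
    (P [set w | (eps < nrm (u n - u m) w)%R] < lam%:E)%E.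

Definition RN_complete : Prop :=
  forall u, cauchy_seq u -> exists y, cvg_seq u y.

Definition lim_right0 (F : R -> S) (y : S) : Prop :=
  forall eps lam : R, 0 < eps -> 0 < lam ->
  exists2 delta : R, 0 < delta & forall t, 0 < t -> t < delta ->
    (P [set w | (eps < nrm (F t - y) w)%R] < lam%:E)%E.

Definition bounded_op (T : S -> S) : Prop :=
  (forall xi eta x y, Kval isC xi -> Kval isC eta ->
      T (smul xi x + smul eta y) = smul xi (T x) + smul eta (T y)) /\
  exists xi, L0pos xi /\
    forall x, {ae P, forall w, nrm (T x) w <= xi w * nrm x w}.

Definition is_ess_sup (I : Type) (D : set I) (F : I -> Omega -> \bar R)
  (s : Omega -> \bar R) : Prop :=
  measurable_fun setT s /\
  (forall i, D i -> {ae P, forall w, (F i w <= s w)%E}) /\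
  (forall u, measurable_fun setT u ->
     (forall i, D i -> {ae P, forall w, (F i w <= u w)%E}) ->
     {ae P, forall w, (s w <= u w)%E}).

Definition is_ess_inf (I : Type) (D : set I) (F : I -> Omega -> \bar R)
  (s : Omega -> \bar R) : Prop :=
  measurable_fun setT s /\
  (forall i, D i -> {ae P, forall w, (s w <= F i w)%E}) /\
  (forall u, measurable_fun setT u ->
     (forall i, D i -> {ae P, forall w, (u w <= F i w)%E}) ->
     {ae P, forall w, (u w <= s w)%E}).

Definition is_op_norm (T : S -> S) (n : Omega -> \bar R) : Prop :=
  is_ess_inf
    (fun xi : Omega -> R => L0pos xi /\
       forall x, {ae P, forall w, nrm (T x) w <= xi w * nrm x w})
    (fun xi w => (xi w)%:E) n.

(* C_0-semigroup (T t only matters for t >= 0) *)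
Definition C0_semigroup (T : R -> S -> S) : Prop :=
  (forall t, 0 <= t -> bounded_op (T t)) /\
  (forall x, T 0 x = x) /\
  (forall s t x, 0 <= s -> 0 <= t -> T s (T t x) = T (s + t) x) /\
  (forall x, lim_right0 (fun t => T t x) x).

Definition as_bounded (T : R -> S -> S) : Prop :=
  exists L : R, 0 < L /\
  exists (n : R -> Omega -> \bar R) (s : Omega -> \bar R),
    (forall t, 0 <= t <= L -> is_op_norm (T t) (n t)) /\
    is_ess_sup [set t | 0 <= t <= L] n s /\
    {ae P, forall w, (s w < +oo)%E}.

Definition in_gen_domain (T : R -> S -> S) (x : S) : Prop :=
  exists y, lim_right0 (fun t => smul (cstK t^-1) (T t x - x)) y.

End Module.
End RN.

(** Fix [N] with [||T(t)|| <= N] on [[0, r]]: the a.s. bound on a short interval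
    [[0, L]] propagates to [[0, r]] through [T(t) = T(t/k)^k].  If [T(t)x - x]
    over [t] tends to [y] in probability, then for [0 < h <= r] and [d = h/(n+1)]
    the telescoping sum [T(h)x - x = sum_(m <= n) T(m d)(T(d)x - x)] gives
    [||T(h)x - x|| <= N h ||(T(d)x - x)/d||].  Convergence in probability makes
    [||(T(d)x - x)/d - y|| <= 1] for some [n], almost surely, so
    [||T(h)x - x|| <= N h (||y|| + 1)].  Finally
    [f(t1) - f(t2) = T(t2)(T(t1 - t2)x - x)] for [t2 <= t1], whence the
    Lipschitz constant [N^2 (||y|| + 1)]. *)

From Pilot Require Import Defs.
From HB Require Import structures.
From mathcomp Require Import all_boot all_order all_algebra.
From mathcomp Require Import all_classical all_reals all_analysis measurable_realfun.
From mathcomp Require Import ring.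
From mathcomp Require complex.
Import complex.ComplexField.
Import Order.TTheory GRing.Theory Num.Theory.
Local Open Scope classical_set_scope.
Local Open Scope ring_scope.

Section RNModule.
Context {d : measure_display} {Omega : measurableType d} {R : realType}.
Context {P : probability Omega R} {isC : bool} {S : zmodType}
  {smul : (Omega -> complex.complex R) -> S -> S} {nrm : S -> Omega -> R}.
Hypothesis HM : is_RN_module P isC smul nrm.

Local Notation cstK := (@Defs.cstK _ Omega R).

Lemma Kval_cstK (t : R) : Kval isC (cstK t).
Proof. by split => //=; exact: measurable_cst. Qed.

Lemma cstKD (t u : R) : (fun w => cstK t w + cstK u w) = cstK (t + u).
Proof. by apply: funext => w; rewrite /cstK /=; congr complex.Complex; rewrite addr0. Qed.

Lemma cstKM (t u : R) : (fun w => cstK t w * cstK u w) = cstK (t * u).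
Proof.
apply: funext => w; rewrite /cstK /=; congr complex.Complex.
  by rewrite mulr0 subr0.
by rewrite mulr0 mul0r addr0.
Qed.

Lemma smul_cstKD t u y : smul (cstK (t + u)) y = smul (cstK t) y + smul (cstK u) y.
Proof. by case: HM => _ [smulDl _]; rewrite -cstKD; apply: smulDl; exact: Kval_cstK. Qed.

Lemma smul_cstKM t u y : smul (cstK (t * u)) y = smul (cstK t) (smul (cstK u) y).
Proof. by case: HM => _ [_ [smulA _]]; rewrite -cstKM; apply: smulA; exact: Kval_cstK. Qed.

Lemma smul_cstK1 y : smul (cstK 1) y = y.
Proof. by case: HM => _ [_ [_ [smul1 _]]]; exact: smul1. Qed.

Lemma smul_cstK0 y : smul (cstK 0) y = 0.
Proof.
apply: (@addrI _ (smul (cstK 0) y)).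
by rewrite addr0 -smul_cstKD addr0.
Qed.

Lemma smul_cstKN1 y : smul (cstK (-1)) y = - y.
Proof.
apply: (@addrI _ y); rewrite subrr -{1}[y]smul_cstK1 -smul_cstKD.
by rewrite subrr smul_cstK0.
Qed.

Lemma normc_cstK (t : R) (w : Omega) : Normc.normc (cstK t w) = `|t|.
Proof. by rewrite /cstK /Normc.normc expr0n /= addr0 sqrtr_sqr. Qed.

Lemma nrm_measurable y : measurable_fun setT (nrm y).
Proof. by case: HM => _ [_ [_ [_ [_ [nrmL0 _]]]]]; case: (nrmL0 y). Qed.

Lemma nrm_ge0 y : {ae P, forall w, 0 <= nrm y w}.
Proof. by case: HM => _ [_ [_ [_ [_ [nrmL0 _]]]]]; case: (nrmL0 y). Qed.

Lemma nrm_smul_cstK t y : {ae P, forall w, nrm (smul (cstK t) y) w = `|t| * nrm y w}.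
Proof.
case: HM => _ [_ [_ [_ [_ [_ [nrmZ _]]]]]].
by apply: filterS (nrmZ _ y (Kval_cstK t)) => w ->; rewrite normc_cstK.
Qed.

Lemma nrmD_le y z : {ae P, forall w, nrm (y + z) w <= nrm y w + nrm z w}.
Proof. by case: HM => _ [_ [_ [_ [_ [_ [_ [nrmD _]]]]]]]; exact: nrmD. Qed.

Lemma nrm0 : {ae P, forall w, nrm 0 w = 0}.
Proof. by apply: filterS (nrm_smul_cstK 0 0) => w; rewrite smul_cstK0 normr0 mul0r. Qed.

Lemma nrm_distC y z : {ae P, forall w, nrm (y - z) w = nrm (z - y) w}.
Proof.
apply: filterS (nrm_smul_cstK (-1) (z - y)) => w.
by rewrite smul_cstKN1 opprB normrN normr1 mul1r.
Qed.

Lemma bounded_opB {U : S -> S} : bounded_op P isC smul nrm U ->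
  forall a b, U (a - b) = U a - U b.
Proof.
move=> [linU _] a b.
have := linU (cstK 1) (cstK (-1)) a b (Kval_cstK 1) (Kval_cstK (-1)).
by rewrite !smul_cstK1 !smul_cstKN1.
Qed.

Lemma op_norm_le {U : S -> S} {n : Omega -> \bar R} :
  bounded_op P isC smul nrm U -> is_op_norm P nrm U n ->
  forall y, {ae P, forall w, forall M : R, (n w <= M%:E)%E ->
     nrm (U y) w <= M * nrm y w}.
Proof.
move=> [_ [xi0 [_ Uxi0]]] [_ [_ n_glb]] y.
(* [u = ||U y|| / ||y||] (with [0^-1 = 0]) lies below every admissible bound,
   hence below their infimum [n]. *)
pose u w := nrm (U y) w * (`|nrm y w|) `^ (-1).
have u_meas : measurable_fun setT (fun w => (u w)%:E).
  apply/measurable_EFinP; apply: measurable_funM; first exact: nrm_measurable.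
  exact: (measurableT_comp (measurable_powR (-1))
    (measurableT_comp (@normr_measurable R setT) (nrm_measurable y))).
have u_lb xi : (L0pos xi /\ forall x,
     {ae P, forall w, nrm (U x) w <= xi w * nrm x w}) ->
   {ae P, forall w, ((u w)%:E <= (xi w)%:E)%E}.
  move=> [[_ xi_ge0] Uxi]; apply: filterS2 (Uxi y) (nrm_ge0 y) => w Uyw y_ge0.
  rewrite lee_fin /u powR_inv1 ?normr_ge0 // ger0_norm //.
  have [->|y_neq0] := eqVneq (nrm y w) 0; first by rewrite invr0 mulr0.
  by rewrite ler_pdivrMr ?lt0r ?y_neq0 ?y_ge0.
apply: filterS3 (Uxi0 y) (nrm_ge0 y) (n_glb _ u_meas u_lb).
move=> w Uyw y_ge0 u_le_n M n_le_M.
have [y0|y_neq0] := eqVneq (nrm y w) 0.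
  by rewrite y0 mulr0; move: Uyw; rewrite y0 mulr0.
have : u w <= M by rewrite -lee_fin (le_trans u_le_n n_le_M).
rewrite /u powR_inv1 // ger0_norm // => u_le_M.
by rewrite -(divfK y_neq0 (nrm (U y) w)) ler_wpM2r.
Qed.

Lemma lim_right0_ae_close {F : R -> S} {y : S} {dl : nat -> R} {e : R} :
  lim_right0 P nrm F y -> 0 < e -> (forall n, 0 < dl n) ->
  (forall eps, 0 < eps -> exists n, dl n < eps) ->
  {ae P, forall w, exists n, nrm (F (dl n) - y) w <= e}.
Proof.
move=> Fy e0 dl_gt0 dl_small.
pose far n := [set w | e < nrm (F (dl n) - y) w].
have far_meas n : measurable (far n).
  have := nrm_measurable (F (dl n) - y) measurableT _ (measurable_itv `]e, +oo[).
  by rewrite setTI; congr measurable; apply/seteqP; split => w /=;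
    rewrite in_itv /= andbT.
have all_far_meas : measurable (\bigcap_n far n).
  by apply: bigcap_measurable => [|n _]; [exists 0%N | exact: far_meas].
exists (\bigcap_n far n); split => //.
  apply/eqP; rewrite eq_le measure_ge0 andbT; apply/lee_addgt0Pr => lam lam0.
  have [delta delta0 Fdelta] := Fy e lam e0 lam0.
  have [n dln] := dl_small delta delta0.
  rewrite add0e; apply: le_trans (ltW (Fdelta _ (dl_gt0 n) dln)).
  apply: le_measure; rewrite ?inE //; first exact: far_meas.
  by move=> w /(_ n I).
move=> w /= no_close n _; rewrite /far /= ltNge; apply/negP => close.
by apply: no_close; exists n.
Qed.

Section C0Semigroup.
Context {T : R -> S -> S}.
Hypothesis HC : C0_semigroup P isC smul nrm T.

Lemma C0_bounded {t : R} : 0 <= t -> bounded_op P isC smul nrm (T t).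
Proof. by case: HC => Tb _; exact: Tb. Qed.

Lemma C0_T0 y : T 0 y = y.
Proof. by case: HC => _ [T0 _]. Qed.

Lemma C0_TD s t y : 0 <= s -> 0 <= t -> T s (T t y) = T (s + t) y.
Proof. by case: HC => _ [_ [TD _]]; exact: TD. Qed.

Lemma C0_increment s h y : 0 <= s -> 0 <= h ->
  T s (T h y - y) = T (s + h) y - T s y.
Proof. by move=> s0 h0; rewrite (bounded_opB (C0_bounded s0)) C0_TD. Qed.

Lemma as_bounded_unif : as_bounded P nrm T ->
  exists L : R, 0 < L /\ exists M : Omega -> R,
    [/\ measurable_fun setT M, forall w, 1 <= M w &
      forall t y, 0 <= t <= L -> {ae P, forall w, nrm (T t y) w <= M w * nrm y w}].
Proof.
move=> [L [L0 [n [s [n_opnorm [[s_meas [n_le_s _]] s_fin]]]]]].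
exists L; split => //; exists (fun w => Num.max 1 (fine (s w))); split.
- apply: measurable_maxr; first exact: measurable_cst.
  exact: measurableT_comp (fine_measurable measurableT) s_meas.
- by move=> w; rewrite le_max lexx.
move=> t y /[dup] tL /andP[t0 _].
have := op_norm_le (C0_bounded t0) (n_opnorm t tL) y.
apply: filterS3 (n_le_s t tL) s_fin => w nt_le_s s_lt_oo; apply.
apply: le_trans nt_le_s _; move: s_lt_oo.
case: (s w) => [z| |] //= _; last by rewrite leNye.
by rewrite lee_fin le_max lexx orbT.
Qed.

Lemma C0_bound_natmul {L : R} {M : Omega -> R} :
  (forall w, 0 <= M w) ->
  (forall t y, 0 <= t <= L -> {ae P, forall w, nrm (T t y) w <= M w * nrm y w}) ->
  forall (m : nat) t y, 0 <= t <= L ->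
    {ae P, forall w, nrm (T (m%:R * t) y) w <= M w ^+ m * nrm y w}.
Proof.
move=> M0 TM; elim => [|m IH] t y tL.
  by rewrite mul0r C0_T0; apply: aeW => w; rewrite expr0 mul1r.
have [t0 _] := andP tL.
rewrite -natr1 mulrDl mul1r addrC -C0_TD ?mulr_ge0 //.
apply: filterS2 (TM t (T (m%:R * t) y) tL) (IH t y tL) => w Tt Tmt.
by rewrite exprS -mulrA; apply: le_trans Tt _; rewrite ler_wpM2l.
Qed.

Lemma C0_locally_bounded : as_bounded P nrm T -> forall r : R, 0 < r ->
  exists N : Omega -> R, [/\ measurable_fun setT N, forall w, 1 <= N w &
    forall t y, 0 <= t <= r -> {ae P, forall w, nrm (T t y) w <= N w * nrm y w}].
Proof.
move=> /as_bounded_unif[L [L0 [M [M_meas M1 TM]]]] r r0.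
have M0 w : 0 <= M w by apply: le_trans (M1 w).
pose k := (Num.truncn (r / L)).+1.
have k_gt0 : (0 : R) < k%:R by rewrite ltr0n.
have r_le_kL : r <= k%:R * L.
  by rewrite -ler_pdivrMr // ltW // truncnS_gt.
exists (fun w => M w ^+ k); split; first exact: measurable_funX.
  by move=> w; exact: exprn_ege1.
move=> t y /andP[t0 tr].
have tkL : 0 <= t / k%:R <= L.
  by rewrite divr_ge0 ?(ltW k_gt0) //= ler_pdivrMr // mulrC (le_trans tr).
by have := C0_bound_natmul M0 TM k _ y tkL; rewrite mulrC divfK ?gt_eqF.
Qed.

Section Orbit.
Context {N : Omega -> R} {r : R} {x : S}.
Hypothesis N_ge0 : forall w, 0 <= N w.
Hypothesis TN : forall {t} y, 0 <= t <= r ->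
  {ae P, forall w, nrm (T t y) w <= N w * nrm y w}.

Lemma orbit_telescope_le {dl : R} : 0 <= dl -> forall m : nat, m%:R * dl <= r ->
  {ae P, forall w, nrm (T (m%:R * dl) x - x) w <= m%:R * N w * nrm (T dl x - x) w}.
Proof.
move=> dl0; elim => [|m IH] mr.
  by rewrite mul0r C0_T0 subrr; apply: filterS nrm0 => w ->; rewrite !mul0r.
have md0 : 0 <= m%:R * dl by rewrite mulr_ge0.
have mr' : m%:R * dl <= r by apply: le_trans mr; rewrite ler_wpM2r // ler_nat.
have -> : T (m.+1%:R * dl) x - x =
    (T (m%:R * dl) x - x) + T (m%:R * dl) (T dl x - x).
  by rewrite C0_increment // -natr1 mulrDl mul1r [RHS]addrC addrA subrK.
have md_in : 0 <= m%:R * dl <= r by rewrite md0.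
apply: filterS3 (nrmD_le (T (m%:R * dl) x - x) (T (m%:R * dl) (T dl x - x)))
  (IH mr') (TN (T dl x - x) md_in).
move=> w tri IHw TNw; apply: le_trans tri _.
by rewrite -natr1 !mulrDl mul1r; exact: lerD.
Qed.

Lemma orbit_increment_le {y : S} :
  lim_right0 P nrm (fun t => smul (cstK t^-1) (T t x - x)) y ->
  forall h, 0 <= h <= r ->
  {ae P, forall w, nrm (T h x - x) w <= N w * (`|nrm y w| + 1) * h}.
Proof.
move=> Ay h /andP[h0 hr].
have [->|h_neq0] := eqVneq h 0.
  by rewrite C0_T0 subrr; apply: filterS nrm0 => w ->; rewrite mulr0.
have h_gt0 : 0 < h by rewrite lt0r h_neq0.
pose dl n := h / n.+1%:R.
pose g n := smul (cstK (dl n)^-1) (T (dl n) x - x).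
have dl_gt0 n : 0 < dl n by rewrite divr_gt0 // ltr0n.
have dl_small eps : 0 < eps -> exists n, dl n < eps.
  move=> eps0; exists (Num.truncn (h / eps)).
  by rewrite /dl ltr_pdivrMr ?ltr0n // mulrC -ltr_pdivrMr // truncnS_gt.
have bound_g n : {ae P, forall w, nrm (T h x - x) w <= N w * h * nrm (g n) w}.
  have ndl : n.+1%:R * dl n = h by rewrite /dl mulrC divfK // pnatr_eq0.
  have scale : T (dl n) x - x = smul (cstK (dl n)) (g n).
    by rewrite /g -smul_cstKM divff ?smul_cstK1 // gt_eqF.
  have := orbit_telescope_le (ltW (dl_gt0 n)) n.+1; rewrite ndl => /(_ hr).
  apply: filterS2 (nrm_smul_cstK (dl n) (g n)) => w; rewrite -scale => -> Tw.
  apply: le_trans Tw _; rewrite gtr0_norm // -ndl.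
  by rewrite (_ : _ * _ * _ = N w * (n.+1%:R * dl n) * nrm (g n) w) //; ring.
have bound_all := ae_foralln bound_g.
have tri_all := ae_foralln (fun n => nrmD_le y (g n - y)).
have close_some := lim_right0_ae_close Ay ltr01 dl_gt0 dl_small.
apply: filterS3 bound_all tri_all close_some.
move=> w bnd tri [n close]; apply: le_trans (bnd n) _.
rewrite [leRHS]mulrAC ler_wpM2l ?mulr_ge0 //.
have := tri n; rewrite addrC subrK => /le_trans -> //.
by rewrite lerD ?ler_norm.
Qed.

Lemma orbit_lipschitz {K : Omega -> R} :
  (forall h, 0 <= h <= r -> {ae P, forall w, nrm (T h x - x) w <= K w * h}) ->
  forall t1 t2, 0 <= t1 <= r -> 0 <= t2 <= r ->
  {ae P, forall w, nrm (T t1 x - T t2 x) w <= N w * K w * `|t1 - t2|}.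
Proof.
move=> TK t1 t2.
wlog t21 : t1 t2 / t2 <= t1 => [hwlog t1r t2r|/andP[_ t1r] t2_in].
  have [/hwlog|/ltW/hwlog] := leP t2 t1; first exact.
  move=> /(_ t2r t1r); apply: filterS2 (nrm_distC (T t1 x) (T t2 x)) => w ->.
  by rewrite distrC.
have t20 : 0 <= t2 by case/andP: t2_in.
have h_in : 0 <= t1 - t2 <= r.
  by rewrite subr_ge0 t21 /= (le_trans _ t1r) // lerBlDr lerDl.
have -> : T t1 x - T t2 x = T t2 (T (t1 - t2) x - x).
  by rewrite C0_increment ?subr_ge0 // addrCA subrr addr0.
rewrite ger0_norm ?subr_ge0 //.
apply: filterS2 (TN (T (t1 - t2) x - x) t2_in) (TK _ h_in) => w TNw TKw.
by apply: le_trans TNw _; rewrite -mulrA ler_wpM2l.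
Qed.

End Orbit.
End C0Semigroup.
End RNModule.

Theorem lemma3p7 (d : measure_display) (Omega : measurableType d)
  (R : realType) (P : probability Omega R) (isC : bool) (S : zmodType)
  (smul : (Omega -> complex.complex R) -> S -> S) (nrm : S -> Omega -> R)
  (T : R -> S -> S) :
  is_RN_module P isC smul nrm ->
  RN_complete P nrm ->
  C0_semigroup P isC smul nrm T ->
  as_bounded P nrm T ->
  forall x : S, in_gen_domain P smul nrm T x ->
  let f := fun t : R => T t x in
  forall r : R, 0 < r ->
  exists xi : Omega -> R, L0pos xi /\
    forall t1 t2 : R, 0 <= t1 <= r -> 0 <= t2 <= r ->
      {ae P, forall w, nrm (f t1 - f t2) w <= xi w * `|t1 - t2|}.
Proof.
move=> HM _ HC HB x [y Ay] f r r0.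
have [N [N_meas N1 TN]] := C0_locally_bounded HM HC HB r r0.
have N0 w : 0 <= N w by apply: le_trans (N1 w).
have TK := orbit_increment_le HM HC N0 TN Ay.
exists (fun w => N w * (N w * (`|nrm y w| + 1))); split; last first.
  move=> t1 t2 t1r t2r; exact (orbit_lipschitz HM HC N0 TN TK t1 t2 t1r t2r).
split; last by move=> w; rewrite !mulr_ge0 ?addr_ge0.
apply: measurable_funM => //; apply: measurable_funM => //.
apply: measurable_funD; last exact: measurable_cst.
exact: measurableT_comp (@normr_measurable R setT) (nrm_measurable HM y).
Qed.
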